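(* Let $\mathcal{S}_{\textsf{EVSP}}$ denote an optimal solution for $\mathcal{I}_{\textsf{EVSP}} = f(\mathcal{I}_{\textsf{BPP}})$. If a solution $\mathcal{S}_{\textsf{BPP}}$ for $\mathcal{I}_{\textsf{BPP}}$ is constructed from $\mathcal{S}_{\textsf{EVSP}}$ by packing, for each vehicle used to serve item customers, all items associated with the item customers served by that vehicle into a single bin, and packing each item associated with an unserved item customer (if any) into its own bin, then $\mathcal{S}_{\textsf{BPP}}$ is an optimal solution for $\mathcal{I}_{\textsf{BPP}}$.
   Context: The electric vehicle sharing problem (EVSP): there is a set of stations, each with a capacity (number of parking spaces) and a number of charging facilities; a fleet of identical electric vehicles with battery capacity $\textsf{L}$ initially located at stations; and a set of customers, each with a set of driving demands $(s^{\text{out}}, t_i, s^{\text{in}}, t_j, \varepsilon)$ (pick-up station, departure time, drop-off station, arrival time, required energy). A demand is fulfilled by a vehicle if the vehicle is at the pick-up station at time $t_i$, its battery energy is at least $\varepsilon$, and there is a free parking space at the drop-off station; the vehicle's energy decreases by $\varepsilon$ and increases only by charging at a charging facility. A customer is served iff all its demands are fulfilled; the objective is to maximize the total rental time $\sum (t_j - t_i)$ over demands of served customers. The one-dimensional bin packing problem (BPP): given items $\mathcal{N} = \{1,\dots,n\}$ with sizes $\ell_i \in (0,1]$, find a partition $\{\mathcal{N}_1,\dots,\mathcal{N}_k\}$ of $\mathcal{N}$ such that the sizes in each part sum to at most $1$ and $k$ (the number of bins) is minimized. The reduction $f$ maps a BPP instance $\mathcal{I}_{\textsf{BPP}}$ to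 the EVSP instance $\mathcal{I}_{\textsf{EVSP}}$ with $2n$ customers, each having a single demand: there is a single station $s$ with capacity $n$ and no charging facilities; there are $n$ fully charged vehicles initially at $s$, each with battery capacity $\textsf{L} = 1$; for each item $i \in \mathcal{N}$ there is an item customer with the single demand $(s, 2i, s, 2i+1, \ell_i)$; and there are $n$ dummy customers, each with the single demand $(s, 1, s, 2, \textsf{L})$. Each customer contributes rental time $1$ to the objective, so maximizing total rental time is equivalent to maximizing the number of served customers. *)

From mathcomp Require Import all_boot all_order all_algebra.
Set Implicit Arguments. Unset Strict Implicit. Unset Printing Implicit Defensive.
Import Order.TTheory GRing.Theory Num.Theory.

(* A driving demand (s_out, t_i, s_in, t_j, eps). Times are natural numbers. *)
Record demand (S R : Type) := Demand {
  d_out : S; d_dep : nat; d_in : S; d_arr : nat; d_eps : R }.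

Record evsp (R : realFieldType) := EVSP {
  ev_station : finType;
  ev_cap : ev_station -> nat;                (* number of parking spaces *)
  ev_vehicle : finType;
  ev_L : R;                                  (* battery capacity *)
  ev_init_station : ev_vehicle -> ev_station;
  ev_init_energy : ev_vehicle -> R;
  ev_customer : finType;
  ev_demands : ev_customer -> seq (demand ev_station R) }.

Section EVSP.
Variables (R : realFieldType) (I : evsp R).

Definition slot := {c : ev_customer I & 'I_(size (ev_demands c))}.
Definition slot_of (c : ev_customer I) (k : 'I_(size (ev_demands c))) : slot :=
  @existT _ (fun c => 'I_(size (ev_demands c))) c k.
Definition dem (x : slot) : demand (ev_station I) R :=
  tnth (in_tuple (ev_demands (tag x))) (tagged x).

(* A solution assigns to each demand the vehicle fulfilling it (if any). *)
Definition evsp_sol := slot -> option (ev_vehicle I).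

Variable sol : evsp_sol.

Definition assigned (v : ev_vehicle I) (x : slot) : bool := sol x == Some v.

Definition driving (v : ev_vehicle I) (t : nat) : bool :=
  [exists x, assigned v x && (d_dep (dem x) <= t < d_arr (dem x))].

Definition position (v : ev_vehicle I) (t : nat) : ev_station I :=
  if [pick x | assigned v x && (d_arr (dem x) <= t) &&
        [forall y, assigned v y && (d_arr (dem y) <= t) ==> (d_arr (dem y) <= d_arr (dem x))]]
  is Some x then d_in (dem x) else ev_init_station v.

Definition located (v : ev_vehicle I) (t : nat) (s : ev_station I) : bool :=
  ~~ driving v t && (position v t == s).

(* battery energy of v at time t (no charging facilities) *)
Definition energy (v : ev_vehicle I) (t : nat) : R :=
  (ev_init_energy v - \sum_(x | assigned v x && (d_arr (dem x) <= t)%N) d_eps (dem x))%R.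

Definition vehicle_feasible (v : ev_vehicle I) : Prop :=
  (forall x y, assigned v x -> assigned v y -> x != y ->
     (d_arr (dem x) <= d_dep (dem y)) || (d_arr (dem y) <= d_dep (dem x))) /\
  (forall x, assigned v x ->
     [/\ position v (d_dep (dem x)) = d_out (dem x),
         (d_eps (dem x) <= energy v (d_dep (dem x)))%R &
         #|[set v' | (v' != v) && located v' (d_arr (dem x)) (d_in (dem x))]|
           < ev_cap (d_in (dem x))]).

Definition evsp_feasible : Prop := forall v, vehicle_feasible v.

Definition served (c : ev_customer I) : bool :=
  [forall k : 'I_(size (ev_demands c)), sol (slot_of k) != None].

Definition rental_time : nat :=
  \sum_(c | served c) \sum_(k < size (ev_demands c))
      (d_arr (dem (slot_of k)) - d_dep (dem (slot_of k))).

End EVSP.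

Definition evsp_optimal (R : realFieldType) (I : evsp R) (sol : evsp_sol I) : Prop :=
  evsp_feasible sol /\
  forall sol' : evsp_sol I, evsp_feasible sol' -> rental_time sol' <= rental_time sol.

(* a solution is a partition {N_1,...,N_k} of the items; k = #|P| bins *)
Definition bpp_feasible (R : realFieldType) (n : nat) (l : 'I_n -> R)
    (P : {set {set 'I_n}}) : Prop :=
  partition P [set: 'I_n] /\ forall B, B \in P -> (\sum_(i in B) l i <= 1)%R.

Definition bpp_optimal (R : realFieldType) (n : nat) (l : 'I_n -> R)
    (P : {set {set 'I_n}}) : Prop :=
  bpp_feasible l P /\ forall Q, bpp_feasible l Q -> #|P| <= #|Q|.

(* The reduction f.  Items are 'I_n, item i (0-based) is item i+1 of the    *)
(* paper; customers are inl i (item customers) and inr j (dummy customers). *)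

Definition red_demand (R : realFieldType) (n : nat) (l : 'I_n -> R)
    (c : 'I_n + 'I_n) : demand unit R :=
  match c with
  | inl i => Demand tt (2 * i.+1) tt (2 * i.+1).+1 (l i)
  | inr _ => Demand tt 1 tt 2 1%R   (* energy L = 1 *)
  end.

Definition reduction (R : realFieldType) (n : nat) (l : 'I_n -> R) : evsp R :=
  @EVSP R unit (fun _ => n) 'I_n 1%R (fun _ => tt) (fun _ => 1%R)
        ('I_n + 'I_n)%type (fun c => [:: red_demand l c]).

Definition items_of (R : realFieldType) (n : nat) (l : 'I_n -> R)
    (sol : evsp_sol (reduction l)) (v : 'I_n) : {set 'I_n} :=
  [set i : 'I_n | served sol (inl i : ev_customer (reduction l))
                  && (sol (@slot_of _ (reduction l) (inl i) ord0) == Some v)].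

Definition bpp_of_evsp (R : realFieldType) (n : nat) (l : 'I_n -> R)
    (sol : evsp_sol (reduction l)) : {set {set 'I_n}} :=
  [set items_of sol v | v in [set v : 'I_n | items_of sol v != set0]]
  :|: [set [set i] | i in [set i : 'I_n | ~~ served sol (inl i : ev_customer (reduction l))]].

From mathcomp Require Import all_boot all_order all_algebra.
Import Order.TTheory GRing.Theory Num.Theory.
From mathcomp Require Import zify lra.
Set Implicit Arguments. Unset Strict Implicit. Unset Printing Implicit Defensive.

(* All dummy customers travel during [1, 2], so served dummies use pairwise
   distinct vehicles, and each drains its vehicle's full battery, which then
   cannot serve an item customer (items have positive size).  A vehicle serving
   item customers pays for all of them out of its initial energy 1, so their
   items fit in one bin.  Hence rental time + number of bins of the constructed
   packing <= 2n.  Conversely, a packing into k bins gives a feasible solution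
   of rental time at least 2n - k: the items of the b-th bin ride on vehicle b,
   and the dummies on the n - k remaining vehicles.  Optimality of the EVSP
   solution then bounds the number of bins of the constructed packing by k. *)

Local Open Scope ring_scope.

Lemma ler_sum_subset (R : numDomainType) (T : finType) (P Q : pred T)
    (F : T -> R) :
  (forall i, P i -> Q i) -> (forall i, Q i -> 0 <= F i) ->
  \sum_(i | P i) F i <= \sum_(i | Q i) F i.
Proof.
move=> PQ F0; rewrite [leLHS]big_mkcond [leRHS]big_mkcond /=.
apply: ler_sum => i _; case: ifPn => [/PQ ->|_] //.
by case: ifPn => // /F0.
Qed.

Lemma card_partition_le (T : finType) (P : {set {set T}}) (D : {set T}) :
  partition P D -> (#|P| <= #|D|)%N.
Proof.
move=> partP; rewrite (card_partition partP) -sum1_card.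
by apply: leq_sum => A /(partition_neq0 partP); rewrite card_gt0.
Qed.

Lemma card_ord_geq n m : #|[set j : 'I_n | (m <= j)%N]| = (n - m)%N.
Proof.
by rewrite -sum1dep_card -[RHS]muln1 -sum_nat_const_nat big_geq_mkord.
Qed.

Lemma bin_labeling (R : realFieldType) n (l : 'I_n -> R) (Q : {set {set 'I_n}}) :
  (forall i, 0 <= l i) -> bpp_feasible l Q ->
  exists bin : 'I_n -> 'I_n,
    (forall i, bin i < #|Q|)%N /\ (forall v, \sum_(i | bin i == v) l i <= 1).
Proof.
move=> l_ge0 [partQ Qload].
have blockQ i : pblock Q i \in Q.
  by rewrite pblock_mem // (cover_partition partQ) inE.
have index_lt i : (index (pblock Q i) (enum Q) < #|Q|)%N.
  by rewrite cardE index_mem mem_enum.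
pose bin i := insubd i (index (pblock Q i) (enum Q)).
have binE i : val (bin i) = index (pblock Q i) (enum Q).
  rewrite val_insubd (leq_trans (index_lt i)) //.
  by have := card_partition_le partQ; rewrite cardsT card_ord.
exists bin; split=> [i|v]; first by rewrite binE.
case: (pickP (fun i => bin i == v)) => [i0 /eqP <-|none]; last first.
  by rewrite big_pred0 ?ler01.
apply: le_trans (Qload _ (blockQ i0)); apply: ler_sum_subset => [i /eqP|i _] //.
move=> /(congr1 val); rewrite !binE => same_index.
have <- : pblock Q i = pblock Q i0.
  by apply: (@index_inj _ set0 (enum Q)); rewrite ?mem_enum.
by rewrite mem_pblock (cover_partition partQ) inE.
Qed.

Section Reduction.

Variables (R : realFieldType) (n : nat) (l : 'I_n -> R).
Hypothesis l_range : forall i, 0 < l i <= 1.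

Local Notation I := (reduction l).

Definition slot1 (c : 'I_n + 'I_n) : slot I := @slot_of _ I c ord0.

Local Notation item i := (slot1 (inl i)).
Local Notation dummy j := (slot1 (inr j)).

Lemma slot1_tag (x : slot I) : slot1 (tag x) = x.
Proof.
case: x => c k; rewrite /slot1 /slot_of; congr existT.
by apply/val_inj; case: k => -[].
Qed.

Lemma big_slot1 (T : Type) (idx : T) (op : Monoid.com_law idx)
    (P : pred (slot I)) (F : slot I -> T) :
  \big[op/idx]_(x | P x) F x = \big[op/idx]_(c | P (slot1 c)) F (slot1 c).
Proof.
rewrite (reindex slot1) //; apply: onW_bij.
by exists (@tag _ _) => [|x]; rewrite ?slot1_tag.
Qed.

Lemma energy_reduction (sol : evsp_sol I) v t :
  energy sol v t =
  1 - (\sum_(i | (sol (item i) == Some v) && ((2 * i.+1).+1 <= t)%N) l i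
       + \sum_(j | (sol (dummy j) == Some v) && (2 <= t)%N) 1).
Proof. by rewrite /energy big_slot1 big_sumType. Qed.

Lemma served_slot1 (sol : evsp_sol I) c : served sol c = (sol (slot1 c) != None).
Proof.
apply/forallP/idP => [|sc k]; first exact.
by have -> : k = ord0 by apply/val_inj; case: k => -[].
Qed.

Lemma capacity_reduction (sol : evsp_sol I) v s t :
  (#|[set v' | (v' != v) && located sol v' t s]| < ev_cap s)%N.
Proof.
apply: (@leq_ltn_trans #|[set~ v]|).
  by apply: subset_leq_card; apply/subsetP => w; rewrite !inE => /andP[].
by rewrite cardsC1 card_ord; case: v => v /=; case: (n).
Qed.

Lemma vehicle_feasible_reduction (sol : evsp_sol I) v :
  vehicle_feasible sol v <->
  (forall x y, assigned sol v x -> assigned sol v y -> x != y ->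
     (d_arr (dem x) <= d_dep (dem y))%N || (d_arr (dem y) <= d_dep (dem x))%N) /\
  (forall x, assigned sol v x -> d_eps (dem x) <= energy sol v (d_dep (dem x))).
Proof.
split=> [[disj budget]|[disj budget]]; split=> // x xv.
  by case: (budget x xv).
split; [by case: (position _ _ _); case: (d_out _) | exact: budget |].
exact: capacity_reduction.
Qed.

Section FeasibleSolution.

Variable sol : evsp_sol I.

Lemma items_ofE v i : (i \in items_of sol v) = (sol (item i) == Some v).
Proof. by rewrite inE served_slot1; case: eqP => // ->. Qed.

Lemma rental_timeE :
  rental_time sol =
  (#|[set i | sol (item i) != None]| + #|[set j | sol (dummy j) != None]|)%N.
Proof.
rewrite /rental_time big_sumType /=.
by congr addn; rewrite -sum1dep_card; apply: eq_big => c;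
  rewrite ?served_slot1 // => _; rewrite big_ord1 /=; lia.
Qed.

Definition bin_key (i : 'I_n) : ev_vehicle I + 'I_n :=
  if sol (item i) is Some v then inl v else inr i.

Lemma bin_key_block i :
  [set k in [set: 'I_n] | bin_key i == bin_key k] =
  if sol (item i) is Some v then items_of sol v else [set i].
Proof.
rewrite /bin_key; case si: (sol (item i)) => [v|]; apply/setP => k; rewrite !inE.
  rewrite served_slot1; case: (sol (item k)) => [w|] //=.
  by rewrite (inj_eq Some_inj) (inj_eq (@inl_inj _ _)) eq_sym.
have [->|ki] := eqVneq k i; first by rewrite si !eqxx.
case: (sol (item k)) => [w|] //=.
by rewrite (inj_eq (@inr_inj _ _)) eq_sym (negbTE ki).
Qed.

Lemma bpp_of_evspE : bpp_of_evsp sol = preim_partition bin_key [set: 'I_n].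
Proof.
apply/setP => B; apply/idP/imsetP => [|[i _ ->]]; last first.
  rewrite bin_key_block; case si: (sol (item i)) => [v|]; apply/setUP.
    left; apply/imsetP; exists v; rewrite // inE.
    by apply/set0Pn; exists i; rewrite items_ofE si.
  by right; apply/imsetP; exists i; rewrite // inE served_slot1 si.
case/setUP => /imsetP [w]; rewrite inE => wB ->.
  case/set0Pn: wB => i; rewrite items_ofE => /eqP si.
  by exists i; rewrite // bin_key_block si.
exists w; rewrite // bin_key_block.
by move: wB; rewrite served_slot1; case: (sol _).
Qed.

Lemma card_bpp_of_evsp :
  (#|bpp_of_evsp sol| <= #|[set v | items_of sol v != set0]|
                         + #|[set i | ~~ served sol (inl i : ev_customer I)]|)%N.
Proof.
rewrite /bpp_of_evsp; set A := imset _ _; set B := imset _ _.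
apply: leq_trans (leq_addr #|A :&: B| _) _; rewrite cardsUI.
by apply: leq_add; apply: leq_imset_card.
Qed.

Lemma bpp_of_evsp_partition : partition (bpp_of_evsp sol) [set: 'I_n].
Proof. by rewrite bpp_of_evspE; apply: preim_partitionP. Qed.

Hypothesis feas : evsp_feasible sol.

Lemma energy_budget i v : sol (item i) = Some v ->
  l i + \sum_(k | (sol (item k) == Some v) && (k < i)%N) l k
      + \sum_(j | sol (dummy j) == Some v) 1 <= 1.
Proof.
move=> si; have [_ budget] := (vehicle_feasible_reduction sol v).1 (feas v).
have := budget (item i) (introT eqP si); rewrite energy_reduction /=.
have -> : \sum_(k | (sol (item k) == Some v) && (2 * k.+1 < 2 * i.+1)%N) l k
        = \sum_(k | (sol (item k) == Some v) && (k < i)%N) l k.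
  by apply: eq_bigl => k; rewrite ltn_mul2l ltnS.
have two_le : (1 < 2 * i.+1)%N by lia.
under eq_bigl => j do rewrite two_le andbT.
lra.
Qed.

Lemma dummy_vehicle_serves_no_item i j v :
  sol (item i) = Some v -> sol (dummy j) != Some v.
Proof.
move=> si; apply/eqP => sj; have := energy_budget si.
rewrite [X in _ + X <= _](bigD1 j) ?sj //=.
have items_ge0 : 0 <= \sum_(k | (sol (item k) == Some v) && (k < i)%N) l k.
  by apply: sumr_ge0 => k _; case/andP: (l_range k) => /ltW.
have dummies_ge0 : 0 <= \sum_(k | (sol (dummy k) == Some v) && (k != j)) 1 :> R.
  by apply: sumr_ge0 => k _; apply: ler01.
by case/andP: (l_range i) => li_gt0 _; lra.
Qed.

Lemma dummy_vehicle_inj j j' v :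
  sol (dummy j) = Some v -> sol (dummy j') = Some v -> j = j'.
Proof.
move=> sj sj'; apply/eqP; apply: contraT => neq.
have [disj _] := (vehicle_feasible_reduction sol v).1 (feas v).
apply: (disj (dummy j) (dummy j')); rewrite /assigned ?sj ?sj' //.
by apply: contra neq => /eqP/(congr1 tag) [->].
Qed.

Lemma items_of_load v : \sum_(i in items_of sol v) l i <= 1.
Proof.
case: (set_0Vmem (items_of sol v)) => [->|[i0 i0v]].
  by rewrite big_set0 ler01.
case: (arg_maxnP (fun i : 'I_n => val i) i0v) => i iv imax.
have si : sol (item i) = Some v by apply/eqP; rewrite -items_ofE.
have := energy_budget si.
have earlier : \sum_(k in items_of sol v | k != i) l k
    <= \sum_(k | (sol (item k) == Some v) && (k < i)%N) l k.
  apply: ler_sum_subset => [k /andP[kv ki]|k _].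
    by rewrite -items_ofE kv /= ltn_neqAle ki; apply: imax.
  by case/andP: (l_range k) => /ltW.
have dummies_ge0 : 0 <= \sum_(j | sol (dummy j) == Some v) 1 :> R.
  by apply: sumr_ge0 => k _; apply: ler01.
by move=> budget; rewrite (bigD1 i) //=; lra.
Qed.

Lemma rental_time_bound :
  (rental_time sol + #|[set v | items_of sol v != set0]|
     + #|[set i | ~~ served sol (inl i : ev_customer I)]| <= 2 * n)%N.
Proof.
rewrite rental_timeE.
set S := [set i | _]; set D := [set j | _].
set K := [set v | _]; set U := [set i | _].
have cSU : (#|S| + #|U| = n)%N.
  have -> : U = ~: S by apply/setP => i; rewrite !inE served_slot1.
  by rewrite cardsC card_ord.
pose vehicle j := odflt j (sol (dummy j)).
have cD : #|D| = #|vehicle @: D|.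
  apply/esym/card_in_imset => j j'; rewrite !inE /vehicle.
  case sj: (sol _) => [v|] //; case sj': (sol _) => [v'|] //= _ _ e.
  by subst v'; apply: dummy_vehicle_inj sj sj'.
have : vehicle @: D \subset ~: K.
  apply/subsetP => w /imsetP [j]; rewrite !inE /vehicle.
  case sj: (sol _) => [v|] //= _ ->; apply/negP => /set0Pn [i].
  by rewrite items_ofE => /eqP/(dummy_vehicle_serves_no_item j); rewrite sj eqxx.
move/subset_leq_card; have := cardsC K; rewrite card_ord; lia.
Qed.

Lemma bpp_of_evsp_feasible : bpp_feasible l (bpp_of_evsp sol).
Proof.
split=> [|B]; first exact: bpp_of_evsp_partition.
case/setUP=> /imsetP [w _ ->]; first exact: items_of_load.
by rewrite big_set1; case/andP: (l_range w).
Qed.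

End FeasibleSolution.

Section PackingSolution.

Variables (m : nat) (bin : 'I_n -> 'I_n).
Hypothesis bin_lt : forall i, (bin i < m)%N.
Hypothesis bin_load : forall v, \sum_(i | bin i == v) l i <= 1.

Definition packing_sol : evsp_sol I := fun x =>
  match tag x with
  | inl i => Some (bin i)
  | inr j => if (m <= j)%N then Some j else None
  end.

Lemma packing_sol_rental : (2 * n <= rental_time packing_sol + m)%N.
Proof.
rewrite rental_timeE.
have -> : [set i | packing_sol (item i) != None] = [set: 'I_n].
  by apply/setP => i; rewrite !inE.
have -> : [set j | packing_sol (dummy j) != None] = [set j : 'I_n | (m <= j)%N].
  by apply/setP => j; rewrite !inE /packing_sol /=; case: leqP.
rewrite cardsT card_ord card_ord_geq; lia.
Qed.

Lemma packing_sol_feasible : evsp_feasible packing_sol.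
Proof.
move=> v; apply/vehicle_feasible_reduction; split.
  move=> x y; rewrite -(slot1_tag x) -(slot1_tag y) /assigned /packing_sol /=.
  case: (tag x) => [i|j]; case: (tag y) => [k|j'] /=.
  - move=> _ _ ik; have : (i : nat) != k by apply: contra ik => /eqP/val_inj ->.
    lia.
  - by move=> *; lia.
  - by move=> *; lia.
  - case: (leqP m j) => // _; case: (leqP m j') => // _.
    by move=> /eqP [->] /eqP [->]; rewrite eqxx.
move=> x; rewrite -(slot1_tag x) /assigned energy_reduction /packing_sol /=.
case: (tag x) => [i|j] /=; last first.
  case: leqP => // _ _; rewrite !big_pred0 ?addr0 ?subr0 // => k.
    by rewrite andbF.
  by rewrite ltnS leqn0 muln_eq0 andbF.
move=> /eqP [<-].
rewrite [X in _ - (_ + X)]big_pred0 ?addr0 => [|j]; last first.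
  case: (leqP m j) => // mj; apply/negbTE.
  by apply: contraL mj => /andP[/eqP [->] _]; rewrite -ltnNge.
have earlier :
    \sum_(k | (Some (bin k) == Some (bin i)) && (2 * k.+1 < 2 * i.+1)%N) l k
    <= \sum_(k | (bin k == bin i) && (k != i)) l k.
  apply: ler_sum_subset => [k /andP[/eqP [->] ki]|k _].
    by rewrite eqxx; apply: contraTneq ki => ->; rewrite ltnn.
  by case/andP: (l_range k) => /ltW.
by have := bin_load (bin i); rewrite (bigD1 i) //=; lra.
Qed.

End PackingSolution.
End Reduction.

Theorem proposition7 (R : realFieldType) (n : nat) (l : 'I_n -> R)
  (hl : forall i, (0 < l i <= 1)%R)
  (sol : evsp_sol (reduction l)) :
  evsp_optimal sol -> bpp_optimal l (bpp_of_evsp sol).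
Proof.
move=> [feas opt]; split; first exact: bpp_of_evsp_feasible.
have l_ge0 i : 0 <= l i by case/andP: (hl i) => /ltW.
move=> Q /(bin_labeling l_ge0) [bin [bin_lt bin_load]].
have := opt _ (packing_sol_feasible hl bin_lt bin_load).
have := packing_sol_rental l #|Q| bin.
have := rental_time_bound hl feas.
have := card_bpp_of_evsp sol.
lia.
Qed.
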